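(* Let $v=(x,y,z)\in S$ be a point with at least one irrational coordinate, and consider the subsequence of its itinerary consisting of the symbols not of type $\mathbb{A}$ (this subsequence may be empty, finite, or infinite). (i) The subsequence contains no symbol of type $\mathbb{C}$ before its first $\mathbb{B}$-type... more precisely: the non-$\mathbb{A}$ symbols of the itinerary alternate in type $\mathbb{B},\mathbb{C},\mathbb{B},\mathbb{C},\dots$ starting with type $\mathbb{B}$ (or there are none) if and only if $z=0$. (ii) The non-$\mathbb{A}$ symbols of the itinerary alternate in type $\mathbb{C},\mathbb{B},\mathbb{C},\mathbb{B},\dots$ starting with type $\mathbb{C}$ (or there are none) if and only if $y=z$.
   Context: Let $S = \{(x,y,z)\in\mathbb{R}^3 : 0\le z\le y\le x\le 1\}$; its faces $\{z=0\}$ and $\{y=z\}$ are called $\mathsf{AB}$ and $\mathsf{AC}$. For integers $n\ge1$ define $\mathbb{A}_n = \{\frac1{n+1} < x \le \frac1n,\ 0\le z\le y\le 1-nx\}$, $\mathbb{B}_n = \{0\le z\le 1-nx < y \le x\}$, $\mathbb{C}_n = \{1-nx < z \le y \le x \le \frac1n\}$; together with $\{(0,0,0)\}$ they partition $S$. The 3-dimensional Gauss map $G:S\to S$ is $G(0,0,0)=(0,0,0)$, $G(x,y,z)=\left(\frac1x-n,\frac yx,\frac zx\right)$ on $\mathbb{A}_n$, $G(x,y,z)=\left(\frac{1-y}{x}-n+1,\frac{x-y+z}{x},\frac{x-y}{x}\right)$ on $\mathbb{B}_n$, $G(x,y,z)=\left(\frac{1-z}{x}-n+1,\frac{x-z}{x},\frac{y-z}{x}\right)$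 on $\mathbb{C}_n$. For a point $v$ whose forward orbit never hits the origin (which holds whenever $v$ has an irrational coordinate), its itinerary is the sequence $\mathbb{X}_{a_1},\mathbb{X}_{a_2},\dots$ ($\mathbb{X}\in\{\mathbb{A},\mathbb{B},\mathbb{C}\}$, $a_k\ge1$) with $G^{k-1}(v)\in\mathbb{X}_{a_k}$; a symbol $\mathbb{X}_{a}$ is ''of type $\mathbb{X}$''. *)

From Stdlib Require Import Reals Lra QArith Qreals ClassicalEpsilon.
Open Scope R_scope.

Definition R3 : Type := (R * R * R)%type.

Definition inS (p : R3) : Prop :=
  let '(x, y, z) := p in 0 <= z /\ z <= y /\ y <= x /\ x <= 1.

Definition inA (n : nat) (p : R3) : Prop :=
  let '(x, y, z) := p in
  (1 <= n)%nat /\ inS p /\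
  1 / (INR n + 1) < x /\ x <= 1 / INR n /\ 0 <= z /\ z <= y /\ y <= 1 - INR n * x.

Definition inB (n : nat) (p : R3) : Prop :=
  let '(x, y, z) := p in
  (1 <= n)%nat /\ inS p /\
  0 <= z /\ z <= 1 - INR n * x /\ 1 - INR n * x < y /\ y <= x.

Definition inC (n : nat) (p : R3) : Prop :=
  let '(x, y, z) := p in
  (1 <= n)%nat /\ inS p /\
  1 - INR n * x < z /\ z <= y /\ y <= x /\ x <= 1 / INR n.

Definition GA (n : nat) (p : R3) : R3 :=
  let '(x, y, z) := p in (1 / x - INR n, y / x, z / x).
Definition GB (n : nat) (p : R3) : R3 :=
  let '(x, y, z) := p in ((1 - y) / x - INR n + 1, (x - y + z) / x, (x - y) / x).
Definition GC (n : nat) (p : R3) : R3 :=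
  let '(x, y, z) := p in ((1 - z) / x - INR n + 1, (x - z) / x, (y - z) / x).

Definition pickn (P : nat -> Prop) : nat := epsilon (inhabits 1%nat) P.

(* The 3-dimensional Gauss map G : S -> S (G(0,0,0) = (0,0,0); the value
   outside S is irrelevant and set to (0,0,0)). *)
Definition G (p : R3) : R3 :=
  if excluded_middle_informative (exists n, inA n p) then GA (pickn (fun n => inA n p)) p
  else if excluded_middle_informative (exists n, inB n p) then GB (pickn (fun n => inB n p)) p
  else if excluded_middle_informative (exists n, inC n p) then GC (pickn (fun n => inC n p)) p
  else (0, 0, 0).

(* orbit v k = G^k(v); the k-th point lies in the region of the (k+1)-th symbol. *)
Definition orbit (v : R3) (k : nat) : R3 := Nat.iter k G v.

Definition isB (p : R3) : Prop := exists n, inB n p.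
Definition isC (p : R3) : Prop := exists n, inC n p.
Definition nonA (p : R3) : Prop := isB p \/ isC p.

Definition irrational (r : R) : Prop := ~ exists q : Q, r = Q2R q.

Definition alternates_from (first : R3 -> Prop) (v : R3) : Prop :=
  (forall k, nonA (orbit v k) ->
     (forall j, (j < k)%nat -> ~ nonA (orbit v j)) -> first (orbit v k)) /\
  (forall i j, (i < j)%nat -> nonA (orbit v i) -> nonA (orbit v j) ->
     (forall l, (i < l < j)%nat -> ~ nonA (orbit v l)) ->
     (isB (orbit v i) /\ isC (orbit v j)) \/ (isC (orbit v i) /\ isB (orbit v j))).

(* On the face AB (z = 0) an A-step stays on AB, a B-step lands on AC (y = z)
   and no C-step is possible; symmetrically on AC an A-step stays, a C-step
   lands on AB and no B-step is possible.  Hence an orbit starting on AB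
   (resp. AC) has non-A symbols alternating from B (resp. C).
   Conversely, the distances z and y - z to the two faces, multiplied by the
   product x_0 ... x_(k-1) of the previous first coordinates, are preserved by
   A-steps and exchanged by B- and C-steps.  Along an itinerary alternating
   from B (resp. C) one of them therefore stays equal to its initial value
   c = z (resp. y - z).  Since two C-steps are never consecutive, this forces
   the product of first coordinates to drop by c every three steps, which is
   impossible for c > 0. *)

From Stdlib Require Import Reals Lra Lia Psatz Classical ClassicalEpsilon ZArith.
Open Scope R_scope.

Definition px (p : R3) : R := fst (fst p).
Definition py (p : R3) : R := snd (fst p).
Definition pz (p : R3) : R := snd p.

Lemma inS_iff p : inS p <-> 0 <= pz p <= py p /\ py p <= px p <= 1.
Proof. destruct p as [[x y] z]; unfold inS, px, py, pz; simpl; tauto. Qed.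

Lemma INR_ge1 n : (1 <= n)%nat -> 1 <= INR n.
Proof. intro; apply (le_INR 1); assumption. Qed.

(* The regions with subscript [n] lie in the slab [n x <= 1 < (n+1) x], i.e. [n = floor (1/x)]. *)
Definition index_of (n : nat) (x : R) : Prop := INR n * x <= 1 < (INR n + 1) * x.

Lemma index_of_unique n m x : index_of n x -> index_of m x -> n = m.
Proof.
  intros [H1 H2] [H3 H4].
  assert (Hn := pos_INR n). assert (Hm := pos_INR m).
  assert (0 < x) by nra.
  destruct (lt_eq_lt_dec n m) as [[Hlt|Heq]|Hlt]; [| exact Heq |].
  - assert (INR n + 1 <= INR m) by (rewrite <- S_INR; apply le_INR; lia). nra.
  - assert (INR m + 1 <= INR n) by (rewrite <- S_INR; apply le_INR; lia). nra.
Qed.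

Lemma index_of_pos n x : index_of n x -> 0 < x.
Proof. intros [_ H]; pose proof (pos_INR n); nra. Qed.

Lemma index_of_exists x : 0 < x <= 1 -> exists n, (1 <= n)%nat /\ index_of n x.
Proof.
  intros [Hx Hx1].
  assert (Hr : 1 <= 1 / x) by (apply Rmult_le_reg_r with x; [lra|]; field_simplify; lra).
  destruct (archimed (1 / x)) as [Hup1 Hup2].
  assert (Hup : (1 < up (1 / x))%Z) by (apply lt_IZR; lra).
  exists (Z.to_nat (up (1 / x) - 1)); unfold index_of.
  rewrite INR_IZR_INZ, Z2Nat.id, minus_IZR by lia.
  split; [lia|].
  assert (E : 1 / x * x = 1) by (field; lra).
  split; nra.
Qed.

Lemma inA_index n p : inA n p -> (1 <= n)%nat /\ index_of n (px p).
Proof.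
  destruct p as [[x y] z]; unfold inA, index_of, px; simpl.
  intros (Hn & _ & H1 & H2 & _).
  pose proof (INR_ge1 _ Hn).
  assert (E1 : (INR n + 1) * (1 / (INR n + 1)) = 1) by (field; lra).
  assert (E2 : INR n * (1 / INR n) = 1) by (field; lra).
  split; [exact Hn | split; nra].
Qed.

Lemma inB_index n p : inB n p -> (1 <= n)%nat /\ index_of n (px p).
Proof.
  destruct p as [[x y] z]; unfold inB, index_of, px; simpl.
  intros (Hn & _ & H1 & H2 & H3 & H4).
  split; [exact Hn | split; nra].
Qed.

Lemma inC_index n p : inC n p -> (1 <= n)%nat /\ index_of n (px p).
Proof.
  destruct p as [[x y] z]; unfold inC, index_of, px; simpl.
  intros (Hn & _ & H1 & H2 & H3 & H4).
  pose proof (INR_ge1 _ Hn).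
  assert (E : INR n * (1 / INR n) = 1) by (field; lra).
  split; [exact Hn | split; nra].
Qed.

Lemma inA_inB_disjoint n m p : inA n p -> inB m p -> False.
Proof.
  intros HA HB.
  assert (n = m) by (eapply index_of_unique; [apply inA_index | apply inB_index]; eassumption).
  subst; destruct p as [[x y] z]; unfold inA, inB in *; lra.
Qed.

Lemma inA_inC_disjoint n m p : inA n p -> inC m p -> False.
Proof.
  intros HA HC.
  assert (n = m) by (eapply index_of_unique; [apply inA_index | apply inC_index]; eassumption).
  subst; destruct p as [[x y] z]; unfold inA, inC in *; lra.
Qed.

Lemma inB_inC_disjoint n m p : inB n p -> inC m p -> False.
Proof.
  intros HB HC.
  assert (n = m) by (eapply index_of_unique; [apply inB_index | apply inC_index]; eassumption).
  subst; destruct p as [[x y] z]; unfold inB, inC in *; lra.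
Qed.

Lemma isB_isC_disjoint p : isB p -> isC p -> False.
Proof. intros [n HB] [m HC]; exact (inB_inC_disjoint n m p HB HC). Qed.

Lemma pickn_unique (P : nat -> Prop) n : P n -> (forall m, P m -> m = n) -> pickn P = n.
Proof. intros Hn Huniq; apply Huniq; unfold pickn; apply epsilon_spec; exists n; exact Hn. Qed.

Lemma G_A n p : inA n p -> G p = GA n p.
Proof.
  intro H; unfold G.
  destruct (excluded_middle_informative _) as [_ | HA]; [| exfalso; eauto].
  f_equal; apply pickn_unique; [exact H|].
  intros m Hm; eapply index_of_unique; apply inA_index; eassumption.
Qed.

Lemma G_B n p : inB n p -> G p = GB n p.
Proof.
  intro H; unfold G.
  destruct (excluded_middle_informative _) as [[m HA] | _];
    [exfalso; exact (inA_inB_disjoint _ _ _ HA H) |].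
  destruct (excluded_middle_informative _) as [_ | HB]; [| exfalso; eauto].
  f_equal; apply pickn_unique; [exact H|].
  intros m Hm; eapply index_of_unique; apply inB_index; eassumption.
Qed.

Lemma G_C n p : inC n p -> G p = GC n p.
Proof.
  intro H; unfold G.
  destruct (excluded_middle_informative _) as [[m HA] | _];
    [exfalso; exact (inA_inC_disjoint _ _ _ HA H) |].
  destruct (excluded_middle_informative _) as [[m HB] | _];
    [exfalso; exact (inB_inC_disjoint _ _ _ HB H) |].
  destruct (excluded_middle_informative _) as [_ | HC]; [| exfalso; eauto].
  f_equal; apply pickn_unique; [exact H|].
  intros m Hm; eapply index_of_unique; apply inC_index; eassumption.
Qed.

Lemma G_outside p : ~ (exists n, inA n p) -> ~ nonA p -> G p = (0, 0, 0).
Proof.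
  intros HA HnA; unfold G, nonA, isB, isC in *.
  repeat (destruct (excluded_middle_informative _); [tauto |]); reflexivity.
Qed.

Lemma region_cover p : inS p -> 0 < px p -> (exists n, inA n p) \/ nonA p.
Proof.
  intros HS Hx; pose proof HS as HS'; rewrite inS_iff in HS'.
  destruct (index_of_exists (px p)) as (n & Hn & H1 & H2); [lra|].
  pose proof (INR_ge1 _ Hn).
  assert (E1 : (INR n + 1) * (1 / (INR n + 1)) = 1) by (field; lra).
  assert (E2 : INR n * (1 / INR n) = 1) by (field; lra).
  assert (0 < 1 / INR n) by (apply Rdiv_lt_0_compat; lra).
  assert (0 < 1 / (INR n + 1)) by (apply Rdiv_lt_0_compat; lra).
  destruct p as [[x y] z]; unfold px, py, pz, nonA, isB, isC in *; simpl in *.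
  destruct (Rle_dec y (1 - INR n * x)); [left | right].
  { exists n; unfold inA; repeat split; try assumption; nra. }
  destruct (Rle_dec z (1 - INR n * x)); [left | right]; exists n.
  - unfold inB; repeat split; try assumption; lra.
  - unfold inC; repeat split; try assumption; nra.
Qed.

Lemma x_mul_G_A n p : inA n p ->
  px p * px (G p) = 1 - INR n * px p /\ px p * py (G p) = py p /\ px p * pz (G p) = pz p.
Proof.
  intro H; assert (Hx := index_of_pos _ _ (proj2 (inA_index _ _ H))).
  rewrite (G_A _ _ H); destruct p as [[x y] z]; unfold px, py, pz in *; simpl in *.
  repeat split; field; lra.
Qed.

Lemma x_mul_G_B n p : inB n p ->
  px p * px (G p) = 1 - py p - INR n * px p + px p /\
  px p * py (G p) = px p - py p + pz p /\ px p * pz (G p) = px p - py p.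
Proof.
  intro H; assert (Hx := index_of_pos _ _ (proj2 (inB_index _ _ H))).
  rewrite (G_B _ _ H); destruct p as [[x y] z]; unfold px, py, pz in *; simpl in *.
  repeat split; field; lra.
Qed.

Lemma x_mul_G_C n p : inC n p ->
  px p * px (G p) = 1 - pz p - INR n * px p + px p /\
  px p * py (G p) = px p - pz p /\ px p * pz (G p) = py p - pz p.
Proof.
  intro H; assert (Hx := index_of_pos _ _ (proj2 (inC_index _ _ H))).
  rewrite (G_C _ _ H); destruct p as [[x y] z]; unfold px, py, pz in *; simpl in *.
  repeat split; field; lra.
Qed.

Lemma G_inS p : inS p -> inS (G p).
Proof.
  intro HS; rewrite inS_iff in HS |- *.
  destruct (classic (exists n, inA n p)) as [[n H] | HA].
  { destruct (inA_index _ _ H) as [Hn Hi]; pose proof (index_of_pos _ _ Hi).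
    destruct (x_mul_G_A _ _ H) as (E1 & E2 & E3).
    destruct p as [[x y] z]; unfold inA, index_of, px, py, pz in *; simpl in *.
    repeat split; nra. }
  destruct (classic (nonA p)) as [[[n H] | [n H]] | HnA].
  - destruct (inB_index _ _ H) as [Hn Hi]; pose proof (index_of_pos _ _ Hi).
    destruct (x_mul_G_B _ _ H) as (E1 & E2 & E3).
    destruct p as [[x y] z]; unfold inB, index_of, px, py, pz in *; simpl in *.
    repeat split; nra.
  - destruct (inC_index _ _ H) as [Hn Hi]; pose proof (index_of_pos _ _ Hi).
    destruct (x_mul_G_C _ _ H) as (E1 & E2 & E3).
    destruct p as [[x y] z]; unfold inC, index_of, px, py, pz in *; simpl in *.
    repeat split; nra.
  - rewrite G_outside by assumption; unfold px, py, pz; simpl; lra.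
Qed.

Lemma x_mul_G_nonA p : inS p -> ~ nonA p ->
  px p * py (G p) = py p /\ px p * pz (G p) = pz p.
Proof.
  intros HS HnA; pose proof HS as HS'; rewrite inS_iff in HS'.
  destruct (Req_dec (px p) 0) as [Hx | Hx].
  - rewrite Hx; split; lra.
  - destruct (region_cover p HS) as [[n H] | H]; [lra | | contradiction].
    destruct (x_mul_G_A _ _ H) as (_ & E2 & E3); split; assumption.
Qed.

Lemma x_mul_Gx_le p : inS p -> 0 < px p -> ~ isC p -> px p * px (G p) <= 1 - py p.
Proof.
  intros HS Hx HnC; pose proof HS as HS'; rewrite inS_iff in HS'.
  destruct (region_cover p HS Hx) as [[n H] | [[n H] | H]]; [| | contradiction].
  - destruct (inA_index _ _ H) as [Hn _]; pose proof (INR_ge1 _ Hn).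
    destruct (x_mul_G_A _ _ H) as (E1 & _); nra.
  - destruct (inB_index _ _ H) as [Hn _]; pose proof (INR_ge1 _ Hn).
    destruct (x_mul_G_B _ _ H) as (E1 & _); nra.
Qed.

Lemma AB_face_not_C p : pz p = 0 -> ~ isC p.
Proof.
  intros Hz [n H]; destruct (inC_index _ _ H) as [_ [Hi _]].
  destruct p as [[x y] z]; unfold inC, px, pz in *; simpl in *; lra.
Qed.

Lemma AC_face_not_B p : py p = pz p -> ~ isB p.
Proof. intros Hyz [n H]; destruct p as [[x y] z]; unfold inB, py, pz in *; simpl in *; lra. Qed.

Lemma G_preserves_AB_face p : pz p = 0 -> ~ nonA p -> pz (G p) = 0.
Proof.
  intros Hz HnA; destruct (classic (exists n, inA n p)) as [[n H] | HA].
  - rewrite (G_A _ _ H); destruct p as [[x y] z]; unfold pz in *; simpl in *.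
    rewrite Hz; unfold Rdiv; ring.
  - rewrite G_outside by assumption; reflexivity.
Qed.

Lemma G_preserves_AC_face p : py p = pz p -> ~ nonA p -> py (G p) = pz (G p).
Proof.
  intros Hyz HnA; destruct (classic (exists n, inA n p)) as [[n H] | HA].
  - rewrite (G_A _ _ H); destruct p as [[x y] z]; unfold py, pz in *; simpl in *.
    rewrite Hyz; reflexivity.
  - rewrite G_outside by assumption; reflexivity.
Qed.

Lemma G_maps_AB_face_B p : pz p = 0 -> isB p -> py (G p) = pz (G p).
Proof.
  intros Hz [n H]; rewrite (G_B _ _ H); destruct p as [[x y] z]; unfold py, pz in *; simpl in *.
  rewrite Hz, Rplus_0_r; reflexivity.
Qed.

Lemma G_maps_AC_face_C p : py p = pz p -> isC p -> pz (G p) = 0.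
Proof.
  intros Hyz [n H]; rewrite (G_C _ _ H); destruct p as [[x y] z]; unfold py, pz in *; simpl in *.
  rewrite Hyz; unfold Rdiv; ring.
Qed.

Section Alternation.
Variables (X : Type) (N : X -> Prop) (s : nat -> X).

Fixpoint parity (k : nat) : bool :=
  match k with
  | O => false
  | S k => if excluded_middle_informative (N (s k)) then negb (parity k) else parity k
  end.

Lemma parity_S_in k : N (s k) -> parity (S k) = negb (parity k).
Proof. intro H; simpl; destruct (excluded_middle_informative _); tauto. Qed.

Lemma parity_S_out k : ~ N (s k) -> parity (S k) = parity k.
Proof. intro H; simpl; destruct (excluded_middle_informative _); tauto. Qed.

Lemma parity_gap i j : (i <= j)%nat -> (forall l, (i <= l < j)%nat -> ~ N (s l)) ->
  parity j = parity i.
Proof.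
  induction 1 as [| j Hij IH]; intro Hgap; [reflexivity |].
  rewrite parity_S_out by (apply Hgap; lia).
  apply IH; intros l Hl; apply Hgap; lia.
Qed.

Lemma parity_induction (I : bool -> nat -> Prop) :
  I false O ->
  (forall k, I (parity k) k -> ~ N (s k) -> I (parity k) (S k)) ->
  (forall k, I (parity k) k -> N (s k) -> I (negb (parity k)) (S k)) ->
  forall k, I (parity k) k.
Proof.
  intros H0 Hout Hin; induction k as [| k IH]; [exact H0 |].
  destruct (classic (N (s k))) as [Hk | Hk].
  - rewrite parity_S_in by exact Hk; auto.
  - rewrite parity_S_out by exact Hk; auto.
Qed.

Lemma last_occurrence k :
  (forall j, (j < k)%nat -> ~ N (s j)) \/
  exists i, (i < k)%nat /\ N (s i) /\ forall l, (i < l < k)%nat -> ~ N (s l).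
Proof.
  induction k as [| k IH]; [left; lia |].
  destruct (classic (N (s k))) as [Hk | Hk].
  { right; exists k; repeat split; [lia | exact Hk | lia]. }
  destruct IH as [Hnone | (i & Hik & Hi & Hgap)]; [left | right].
  - intros j Hj; destruct (Nat.eq_dec j k) as [-> | Hjk]; [exact Hk | apply Hnone; lia].
  - exists i; repeat split; [lia | exact Hi |].
    intros l Hl; destruct (Nat.eq_dec l k) as [-> | Hlk]; [exact Hk | apply Hgap; lia].
Qed.

Variables F G : X -> Prop.
Hypothesis FG_disjoint : forall p, F p -> G p -> False.

Definition alternating : Prop :=
  (forall k, N (s k) -> (forall j, (j < k)%nat -> ~ N (s j)) -> F (s k)) /\
  (forall i j, (i < j)%nat -> N (s i) -> N (s j) ->
     (forall l, (i < l < j)%nat -> ~ N (s l)) ->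
     (F (s i) /\ G (s j)) \/ (G (s i) /\ F (s j))).

Definition phase_typed : Prop :=
  forall k, N (s k) -> (if parity k then G else F) (s k).

Lemma parity_after i j : (i < j)%nat -> N (s i) ->
  (forall l, (i < l < j)%nat -> ~ N (s l)) -> parity j = negb (parity i).
Proof.
  intros Hij Hi Hgap; rewrite <- parity_S_in by exact Hi.
  apply parity_gap; [lia |]; intros l Hl; apply Hgap; lia.
Qed.

Lemma parity_before k : (forall j, (j < k)%nat -> ~ N (s j)) -> parity k = false.
Proof. intro Hnone; apply (parity_gap 0); [lia |]; intros l Hl; apply Hnone; lia. Qed.

Lemma alternating_iff_phase_typed : alternating <-> phase_typed.
Proof.
  split.
  - intros [Hfirst Hnext] k; induction k as [k IH] using lt_wf_ind; intro Hk.
    destruct (last_occurrence k) as [Hnone | (i & Hik & Hi & Hgap)].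
    + rewrite parity_before by exact Hnone; exact (Hfirst k Hk Hnone).
    + rewrite (parity_after i k) by assumption.
      specialize (IH i Hik Hi).
      destruct (Hnext i k Hik Hi Hk Hgap) as [[HF HG] | [HG HF]], (parity i);
        simpl in *; eauto; exfalso; eauto.
  - intro Htyped; split.
    + intros k Hk Hnone; specialize (Htyped k Hk).
      rewrite parity_before in Htyped by exact Hnone; exact Htyped.
    + intros i j Hij Hi Hj Hgap.
      pose proof (Htyped i Hi) as Ti; pose proof (Htyped j Hj) as Tj.
      rewrite (parity_after i j) in Tj by assumption.
      destruct (parity i); simpl in *; tauto.
Qed.

End Alternation.

Arguments parity {X} N s k.
Arguments alternating {X} N s F G.
Arguments phase_typed {X} N s F G.

Lemma no_uniform_descent (u : nat -> R) (c : R) (d : nat) :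
  0 < c -> (forall k, 0 <= u k) -> (forall k, u (d + k)%nat <= u k - c) -> False.
Proof.
  intros Hc Hpos Hdrop.
  assert (Hm : forall m, u (m * d)%nat <= u O - INR m * c).
  { induction m as [| m IH]; [simpl; lra |].
    replace (S m * d)%nat with (d + m * d)%nat by lia.
    rewrite S_INR; specialize (Hdrop (m * d)%nat); lra. }
  destruct (INR_archimed c (u O) Hc) as [m Hlarge].
  specialize (Hm m); specialize (Hpos (m * d)%nat); lra.
Qed.

Lemma orbit_S v k : orbit v (S k) = G (orbit v k).
Proof. reflexivity. Qed.

Lemma orbit_inS v k : inS v -> inS (orbit v k).
Proof. intro HS; induction k as [| k IH]; [exact HS | apply G_inS, IH]. Qed.

Lemma alternates_from_isC v : alternates_from isC v <-> alternating nonA (orbit v) isC isB.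
Proof.
  unfold alternates_from, alternating; split; intros [Hfirst Hnext]; split;
    try exact Hfirst; intros i j Hij Hi Hj Hgap; apply or_comm; auto.
Qed.

Lemma alternates_from_no_CC T v : alternates_from T v ->
  forall k, isC (orbit v k) -> ~ isC (orbit v (S k)).
Proof.
  intros [_ Hnext] k H1 H2.
  destruct (Hnext k (S k)) as [[HB _] | [_ HB]];
    [lia | right; exact H1 | right; exact H2 | intros l Hl; lia | |];
    eapply isB_isC_disjoint; eassumption.
Qed.

Lemma face_phase_typed v (Face0 Face1 T0 T1 : R3 -> Prop) :
  (forall p, Face0 p -> ~ nonA p -> Face0 (G p)) ->
  (forall p, Face1 p -> ~ nonA p -> Face1 (G p)) ->
  (forall p, Face0 p -> T0 p -> Face1 (G p)) ->
  (forall p, Face1 p -> T1 p -> Face0 (G p)) ->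
  (forall p, Face0 p -> nonA p -> T0 p) ->
  (forall p, Face1 p -> nonA p -> T1 p) ->
  Face0 v -> phase_typed nonA (orbit v) T0 T1.
Proof.
  intros Keep0 Keep1 Move0 Move1 Type0 Type1 Hv.
  assert (Inv : forall k, (if parity nonA (orbit v) k then Face1 else Face0) (orbit v k)).
  { apply (parity_induction _ nonA (orbit v) (fun b k => (if b then Face1 else Face0) (orbit v k)));
      [exact Hv | |]; intros k Hk HN; rewrite orbit_S;
      destruct (parity nonA (orbit v) k); simpl in *; auto. }
  intros k Hk; specialize (Inv k); destruct (parity nonA (orbit v) k); auto.
Qed.

Fixpoint xprod (v : R3) (k : nat) : R :=
  match k with O => 1 | S k => xprod v k * px (orbit v k) end.

Definition gapAB (v : R3) (k : nat) : R := xprod v k * pz (orbit v k).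
Definition gapAC (v : R3) (k : nat) : R := xprod v k * (py (orbit v k) - pz (orbit v k)).

Lemma gapAB_S v k : gapAB v (S k) = xprod v k * (px (orbit v k) * pz (G (orbit v k))).
Proof. unfold gapAB; simpl; ring. Qed.

Lemma gapAC_S v k : gapAC v (S k) =
  xprod v k * (px (orbit v k) * py (G (orbit v k)) - px (orbit v k) * pz (G (orbit v k))).
Proof. unfold gapAC; simpl; ring. Qed.

Lemma gaps_S_nonA v k : inS v -> ~ nonA (orbit v k) ->
  gapAB v (S k) = gapAB v k /\ gapAC v (S k) = gapAC v k.
Proof.
  intros HS HnA; rewrite gapAB_S, gapAC_S.
  destruct (x_mul_G_nonA _ (orbit_inS v k HS) HnA) as [Ey Ez].
  rewrite Ey, Ez; split; reflexivity.
Qed.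

Lemma gapAC_S_B v k : isB (orbit v k) -> gapAC v (S k) = gapAB v k.
Proof.
  intros [n H]; rewrite gapAC_S; destruct (x_mul_G_B _ _ H) as (_ & Ey & Ez).
  rewrite Ey, Ez; unfold gapAB; ring.
Qed.

Lemma gapAB_S_C v k : isC (orbit v k) -> gapAB v (S k) = gapAC v k.
Proof.
  intros [n H]; rewrite gapAB_S; destruct (x_mul_G_C _ _ H) as (_ & _ & Ez).
  rewrite Ez; reflexivity.
Qed.

Lemma xprod_nonneg v k : inS v -> 0 <= xprod v k.
Proof.
  intro HS; induction k as [| k IH]; simpl; [lra |].
  pose proof (orbit_inS v k HS) as Hk; rewrite inS_iff in Hk.
  apply Rmult_le_pos; [exact IH | lra].
Qed.

Lemma xprod_S_le v k : inS v -> xprod v (S k) <= xprod v k.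
Proof.
  intro HS; pose proof (xprod_nonneg v k HS); pose proof (orbit_inS v k HS) as Hk.
  rewrite inS_iff in Hk; simpl; nra.
Qed.

Section PersistentGap.
Variables (v : R3) (c : R).
Hypothesis v_inS : inS v.
Hypothesis c_pos : 0 < c.
Hypothesis gap_pinned : forall k, gapAB v k = c \/ gapAC v k = c.
Hypothesis no_CC : forall k, isC (orbit v k) -> ~ isC (orbit v (S k)).

Lemma xprod_mul_y_ge k : c <= xprod v k * py (orbit v k).
Proof.
  pose proof (xprod_nonneg v k v_inS) as HP; pose proof (orbit_inS v k v_inS) as Hk.
  rewrite inS_iff in Hk; unfold gapAB, gapAC in gap_pinned.
  destruct (gap_pinned k); nra.
Qed.

Lemma xprod_two_step k : ~ isC (orbit v k) -> xprod v (S (S k)) <= xprod v k - c.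
Proof.
  intro HnC; pose proof (xprod_mul_y_ge k) as Hy.
  pose proof (xprod_nonneg v k v_inS) as HP; pose proof (orbit_inS v k v_inS) as Hk.
  assert (Hx : 0 < px (orbit v k)) by (rewrite inS_iff in Hk; nra).
  pose proof (x_mul_Gx_le _ Hk Hx HnC) as Hbound.
  replace (xprod v (S (S k))) with (xprod v k * (px (orbit v k) * px (G (orbit v k))))
    by (simpl; ring).
  nra.
Qed.

Lemma xprod_three_step k : xprod v (3 + k) <= xprod v k - c.
Proof.
  pose proof (xprod_S_le v k v_inS); pose proof (xprod_S_le v (S k) v_inS).
  pose proof (xprod_S_le v (S (S k)) v_inS).
  destruct (classic (isC (orbit v k))) as [HC | HnC].
  - pose proof (xprod_two_step (S k) (no_CC k HC)); simpl in *; lra.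
  - pose proof (xprod_two_step k HnC); simpl in *; lra.
Qed.

Lemma persistent_gap_absurd : False.
Proof.
  exact (no_uniform_descent (xprod v) c 3 c_pos (fun k => xprod_nonneg v k v_inS) xprod_three_step).
Qed.

End PersistentGap.

Lemma gap_phase_pinned v c (Q0 Q1 : nat -> R) (T0 T1 : R3 -> Prop) :
  (forall k, ~ nonA (orbit v k) -> Q0 (S k) = Q0 k /\ Q1 (S k) = Q1 k) ->
  (forall k, T0 (orbit v k) -> Q1 (S k) = Q0 k) ->
  (forall k, T1 (orbit v k) -> Q0 (S k) = Q1 k) ->
  phase_typed nonA (orbit v) T0 T1 -> Q0 O = c ->
  forall k, Q0 k = c \/ Q1 k = c.
Proof.
  intros Keep Move0 Move1 Htyped H0.
  assert (Inv : forall k, (if parity nonA (orbit v) k then Q1 k else Q0 k) = c).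
  { apply (parity_induction _ nonA (orbit v) (fun b k => (if b then Q1 k else Q0 k) = c));
      [exact H0 | |]; intros k Hk HN.
    - destruct (Keep k HN) as [E0 E1]; destruct (parity nonA (orbit v) k);
        [rewrite E1 | rewrite E0]; exact Hk.
    - specialize (Htyped k HN); destruct (parity nonA (orbit v) k); simpl in *;
        [rewrite Move1 | rewrite Move0]; assumption. }
  intro k; specialize (Inv k); destruct (parity nonA (orbit v) k); auto.
Qed.

Lemma isC_isB_disjoint p : isC p -> isB p -> False.
Proof. intros HC HB; exact (isB_isC_disjoint p HB HC). Qed.

Lemma alternates_from_isB_iff v : inS v -> (alternates_from isB v <-> pz v = 0).
Proof.
  intro HS; split.
  - intro Halt; pose proof HS as HS'; rewrite inS_iff in HS'.
    destruct (Req_dec (pz v) 0) as [Hz | Hz]; [exact Hz | exfalso].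
    apply (persistent_gap_absurd v (pz v) HS); [lra | | exact (alternates_from_no_CC _ _ Halt)].
    apply (gap_phase_pinned v _ (gapAB v) (gapAC v) isB isC).
    + intros k HnA; exact (gaps_S_nonA v k HS HnA).
    + exact (gapAC_S_B v).
    + exact (gapAB_S_C v).
    + exact (proj1 (alternating_iff_phase_typed _ _ _ _ _ isB_isC_disjoint) Halt).
    + unfold gapAB; simpl; ring.
  - intro Hz; apply (alternating_iff_phase_typed _ _ _ _ _ isB_isC_disjoint).
    apply (face_phase_typed v (fun p => pz p = 0) (fun p => py p = pz p)); try assumption.
    + exact G_preserves_AB_face.
    + exact G_preserves_AC_face.
    + exact G_maps_AB_face_B.
    + exact G_maps_AC_face_C.
    + intros p Hp [HB | HC]; [exact HB | exfalso; exact (AB_face_not_C p Hp HC)].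
    + intros p Hp [HB | HC]; [exfalso; exact (AC_face_not_B p Hp HB) | exact HC].
Qed.

Lemma alternates_from_isC_iff v : inS v -> (alternates_from isC v <-> py v = pz v).
Proof.
  intro HS; split.
  - intro Halt; pose proof HS as HS'; rewrite inS_iff in HS'.
    destruct (Req_dec (py v) (pz v)) as [Hyz | Hyz]; [exact Hyz | exfalso].
    apply (persistent_gap_absurd v (py v - pz v) HS); [lra | | exact (alternates_from_no_CC _ _ Halt)].
    intro k; apply or_comm; revert k.
    apply (gap_phase_pinned v _ (gapAC v) (gapAB v) isC isB).
    + intros k HnA; apply and_comm, (gaps_S_nonA v k HS HnA).
    + exact (gapAB_S_C v).
    + exact (gapAC_S_B v).
    + apply (alternating_iff_phase_typed _ _ _ _ _ isC_isB_disjoint).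
      apply alternates_from_isC, Halt.
    + unfold gapAC; simpl; ring.
  - intro Hyz; apply alternates_from_isC.
    apply (alternating_iff_phase_typed _ _ _ _ _ isC_isB_disjoint).
    apply (face_phase_typed v (fun p => py p = pz p) (fun p => pz p = 0)); try assumption.
    + exact G_preserves_AC_face.
    + exact G_preserves_AB_face.
    + exact G_maps_AC_face_C.
    + exact G_maps_AB_face_B.
    + intros p Hp [HB | HC]; [exfalso; exact (AC_face_not_B p Hp HB) | exact HC].
    + intros p Hp [HB | HC]; [exact HB | exfalso; exact (AB_face_not_C p Hp HC)].
Qed.

Theorem mainTheorem16 (x y z : R) :
  inS (x, y, z) ->
  (irrational x \/ irrational y \/ irrational z) ->
  (alternates_from isB (x, y, z) <-> z = 0) /\
  (alternates_from isC (x, y, z) <-> y = z).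
Proof.
  intros HS _; split.
  - exact (alternates_from_isB_iff _ HS).
  - exact (alternates_from_isC_iff _ HS).
Qed.
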